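(* Let $(t_j^i)_{0\le j\le i}$ be real numbers and let $h_{j,k}^i$ ($0\le k\le i$, $0\le j\le i-k$) be defined by $h_{j,0}^i=t_j^i$ and $h_{j,k}^i=h_{j,k-1}^{i-1}+h_{j,k-1}^{i}+h_{j+1,k-1}^{i}$ for $k\ge 1$. Then for any $0\leq k \leq i$, $0\leq j \leq i-k$, $$h^i_{j,k}=\sum_{r=i-k}^{i} \sum_{s=j}^{j+k-i+r} \binom{k}{s-j,\,i-r,\,k+j+r-s-i} t_{s}^{r}.$$
   Context: For non-negative integers $p,q,r$ with $p+q+r=n$, $\binom{n}{p,q,r}=\frac{n!}{p!\,q!\,r!}$ denotes the tetrahedron trinomial coefficient. *)

From HB Require Import structures.
From mathcomp Require Import all_boot all_order all_algebra.
Set Implicit Arguments. Unset Strict Implicit. Unset Printing Implicit Defensive.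
Import Order.TTheory GRing.Theory Num.Theory.
Local Open Scope ring_scope.

Definition trinom (R : realFieldType) (n p q r : nat) : R :=
  (n`!)%:R / ((p`!)%:R * (q`!)%:R * (r`!)%:R).

(* h t k i j = h^i_{j,k}, where t i j = t^i_j.
   h^i_{j,0} = t^i_j,
   h^i_{j,k} = h^{i-1}_{j,k-1} + h^i_{j,k-1} + h^i_{j+1,k-1}  (k >= 1).
   Values outside the range 0 <= k <= i, 0 <= j <= i - k are irrelevant. *)
Fixpoint h (R : realFieldType) (t : nat -> nat -> R) (k i j : nat) : R :=
  match k with
  | 0 => t i j
  | k'.+1 => h t k' i.-1 j + h t k' i j + h t k' i j.+1
  end.

From HB Require Import structures.
From mathcomp Require Import all_boot all_order all_algebra.
From mathcomp Require Import ring zify.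

Set Implicit Arguments.
Unset Strict Implicit.
Unset Printing Implicit Defensive.
Import Order.TTheory GRing.Theory Num.Theory.
Local Open Scope ring_scope.

(* With E the shift j |-> j + 1 and D the shift i |-> i - 1, the recursion says
   h_k = (1 + D + E) h_(k-1), so h_k = (1 + D + E)^k t.  Since D and E commute,
   expanding binomially first in D and then in E gives
   h^i_(j,k) = sum_b C(k,b) sum_a C(k-b,a) t^(i-b)_(j+a); this closed form is
   checked against the recursion with Pascal's rule, and the product
   C(k,b) C(k-b,a) is the trinomial coefficient of the statement. *)

Lemma sum_binS (V : nmodType) (x : nat -> V) m :
  \sum_(b < m.+2) x b *+ 'C(m.+1, b) =
  \sum_(b < m.+1) x b *+ 'C(m, b) + \sum_(b < m.+1) x b.+1 *+ 'C(m, b).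
Proof.
rewrite big_ord_recl /=.
under eq_bigr => b _ do rewrite /bump /= add1n binS mulrnDr.
rewrite big_split /= addrA; congr (_ + _).
rewrite [RHS]big_ord_recl [in LHS]big_ord_recr /= !bin0 bin_small // mulr0n addr0.
by congr (_ + _); apply: eq_bigr => b _; rewrite /bump /= add1n.
Qed.

Section ClosedForm.
Variables (V : nmodType) (t : nat -> nat -> V).

Definition hrow m i j := \sum_(a < m.+1) t i (j + a) *+ 'C(m, a).

Definition hclosed k i j := \sum_(b < k.+1) hrow (k - b) (i - b) j *+ 'C(k, b).

Lemma hrowS m i j : hrow m.+1 i j = hrow m i j + hrow m i j.+1.
Proof.
rewrite /hrow (sum_binS (fun a => t i (j + a))); congr (_ + _).
by apply: eq_bigr => a _; rewrite addnS addSn.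
Qed.

Lemma hclosedS k i j :
  hclosed k.+1 i j = hclosed k i.-1 j + hclosed k i j + hclosed k i j.+1.
Proof.
rewrite /hclosed (sum_binS (fun b => hrow (k.+1 - b) (i - b) j)).
rewrite -addrA [LHS]addrC; congr (_ + _).
  by apply: eq_bigr => b _; rewrite subSS subnS predn_sub.
rewrite -big_split /=; apply: eq_bigr => -[b /= bk] _.
by rewrite subSn // hrowS mulrnDl.
Qed.

End ClosedForm.

Lemma h_hclosed (R : realFieldType) (t : nat -> nat -> R) k i j :
  h t k i j = hclosed t k i j.
Proof.
elim: k i j => [|k IH] i j /=.
  by rewrite /hclosed big_ord1 /hrow big_ord1 !bin0 addn0 subn0.
by rewrite !IH hclosedS.
Qed.

Lemma trinom_binom (R : realFieldType) k a b : (a + b <= k)%N ->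
  trinom R k a b (k - b - a) = 'C(k, b)%:R * 'C(k - b, a)%:R.
Proof.
move=> abk; have bk : (b <= k)%N by lia.
have ak : (a <= k - b)%N by lia.
have fact_neq0 n : n`!%:R != 0 :> R by rewrite pnatr_eq0 -lt0n fact_gt0.
rewrite /trinom -(bin_fact bk) -(bin_fact ak) !natrM.
by field; rewrite !fact_neq0.
Qed.

Lemma big_nat_rev_ord (V : nmodType) (f : nat -> V) n k : (k <= n)%N ->
  \sum_(n - k <= r < n.+1) f r = \sum_(b < k.+1) f (n - b)%N.
Proof.
move=> kn; rewrite big_nat_rev -{1}(add0n (n - k)%N) big_addn big_mkord.
have -> : (n.+1 - (n - k) = k.+1)%N by lia.
by apply: eq_bigr => b _; congr f; lia.
Qed.

Lemma big_nat_shift (V : nmodType) (f : nat -> V) j n :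
  \sum_(j <= s < j + n) f s = \sum_(a < n) f (j + a)%N.
Proof.
rewrite -{1}(add0n j) big_addn addKn big_mkord.
by apply: eq_bigr => a _; rewrite addnC.
Qed.

Theorem corollary3 (R : realFieldType) (t : nat -> nat -> R) (i j k : nat) :
  (k <= i)%N -> (j <= i - k)%N ->
  h t k i j =
  \sum_(i - k <= r < i.+1)
     \sum_(j <= s < (j + k + r - i).+1)
        trinom R k (s - j) (i - r) (k + j + r - s - i) * t r s.
Proof.
move=> ki _; rewrite h_hclosed big_nat_rev_ord //.
apply: eq_bigr => -[b /= bk] _.
have -> : (j + k + (i - b) - i).+1 = (j + (k - b).+1)%N by lia.
rewrite big_nat_shift /hrow -sumrMnl; apply: eq_bigr => -[a /= ak] _.
have -> : (j + a - j = a)%N by lia.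
have -> : (i - (i - b) = b)%N by lia.
have -> : (k + j + (i - b) - (j + a) - i = k - b - a)%N by lia.
rewrite trinom_binom; last by lia.
by rewrite -mulrnA mulnC -natrM mulr_natl.
Qed.
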